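(* Let $\mathbb{K}^r_{c,m}$ be an $r$-uniform star-hypergraph with $m\ge 2$ edges and centre of size $c$, where $1\le c<r$. Then $\lambda(\mathbb{K}^r_{c,m})=m(r-c)+2c-1$.
   Context: An $r$-uniform hypergraph (every edge has exactly $r$ vertices) is a star-hypergraph if there is a set $\mathcal{C}\subset V$, its centre, such that $e_i\cap e_j=\mathcal{C}$ for all distinct edges $e_i,e_j$; with $m$ edges and $|\mathcal{C}|=c$ it is denoted $\mathbb{K}^r_{c,m}$ (its vertex set is the union of its edges). An $L(2,1)$-colouring of a hypergraph $\mathbb{H}=(V,E)$ is a map $f:V\to\mathbb{Z}_{\ge 0}$ such that $|f(u)-f(v)|\ge 2$ whenever $u\ne v$ lie in a common edge, and $|f(u)-f(v)|\ge 1$ whenever there are edges $e_1\ni v$, $e_2\ni u$ with $(e_1\cap e_2)\setminus\{u,v\}\ne\emptyset$. Its span is $\max f-\min f$, and $\lambda(\mathbb{H})$ is the minimum span. *)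

From mathcomp Require Import all_boot.
Set Implicit Arguments. Unset Strict Implicit. Unset Printing Implicit Defensive.

(* A hypergraph on the finite vertex type V is given by its edge set
   E : {set {set V}}; its vertex set is all of V. *)

Definition uniform (V : finType) (r : nat) (E : {set {set V}}) : Prop :=
  forall e, e \in E -> #|e| = r.

Definition covered_by_edges (V : finType) (E : {set {set V}}) : Prop :=
  forall v : V, exists2 e, e \in E & v \in e.

Definition is_star_centre (V : finType) (E : {set {set V}}) (C : {set V}) : Prop :=
  forall e1 e2, e1 \in E -> e2 \in E -> e1 != e2 -> e1 :&: e2 = C.

Definition L21_colouring (V : finType) (E : {set {set V}}) (f : V -> nat) : Prop :=
  (forall u v e, u != v -> e \in E -> u \in e -> v \in e ->
      (f u + 2 <= f v) || (f v + 2 <= f u)) /\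
  (forall u v e1 e2, u != v -> e1 \in E -> e2 \in E -> v \in e1 -> u \in e2 ->
      (e1 :&: e2) :\: [set u; v] != set0 -> f u != f v).

Definition max_col (V : finType) (f : V -> nat) : nat := \max_(v : V) f v.
Definition min_col (V : finType) (f : V -> nat) : nat :=
  \big[minn/max_col f]_(v : V) f v.

Definition span (V : finType) (f : V -> nat) : nat := max_col f - min_col f.

Definition is_lambda (V : finType) (E : {set {set V}}) (k : nat) : Prop :=
  (exists f : V -> nat, L21_colouring E f /\ span f = k) /\
  (forall f : V -> nat, L21_colouring E f -> k <= span f).

From mathcomp Require Import all_boot zify.
Set Implicit Arguments. Unset Strict Implicit. Unset Printing Implicit Defensive.

(* Every vertex shares an edge with each centre vertex, and two
   non-centre vertices in different petals have the (nonempty) centre as a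
   common neighbourhood, so an L(2,1)-colouring f is injective.  Moreover, a
   centre vertex x is 2-separated from all other colours, so the colour
   f x +- 1 (one step towards the colour of a fixed petal vertex z) is unused,
   lies between min f and max f, and these "nudged" colours are pairwise
   distinct.  Hence |V| + c <= span f + 1, and |V| >= c + m s gives the bound.

   Colour the j-th vertex of the i-th petal by j*m + i (colours
   0 .. ms-1) and the k-th centre vertex by ms + 1 + 2k.  This is an
   L(2,1)-colouring with maximum ms + 2c - 1, so its span is at most the
   bound; by the lower bound it is exactly the bound. *)

Definition far (a b : nat) : bool := (a + 2 <= b) || (b + 2 <= a).

Lemma code_lt m s i j : i < m -> j < s -> j * m + i < m * s.
Proof. by nia. Qed.

Lemma code_inj m i1 i2 j1 j2 :
  i1 < m -> i2 < m -> j1 * m + i1 = j2 * m + i2 -> j1 = j2 /\ i1 = i2.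
Proof.
move=> i1m i2m eq12; have m_gt0 : 0 < m by lia.
have := congr1 (modn^~ m) eq12; rewrite !modnMDl !modn_small // => ei.
by split => //; move: eq12; rewrite ei => /addIn /eqP; rewrite eqn_pmul2r // => /eqP.
Qed.

Lemma code_far m i j1 j2 : 2 <= m -> j1 != j2 -> far (j1 * m + i) (j2 * m + i).
Proof.
move=> m_ge2 ne; rewrite /far; case: (ltngtP j1 j2) ne => // lt _; apply/orP.
  by left; nia.
by right; nia.
Qed.

Lemma enum_index_inj (T : finType) (A : {set T}) :
  {in A &, injective (index^~ (enum A))}.
Proof. by move=> x y xA yA; apply: (index_inj x); rewrite mem_enum. Qed.

Lemma min_col_le (T : finType) (f : T -> nat) (v : T) : min_col f <= f v.
Proof.
rewrite /min_col; have : v \in index_enum T by rewrite mem_index_enum.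
elim: (index_enum T) => [//|a s IH]; rewrite big_cons inE.
case/orP=> [/eqP->|vs]; first exact: geq_minl.
exact: leq_trans (geq_minr _ _) (IH vs).
Qed.

Lemma max_col_ge (T : finType) (f : T -> nat) (v : T) : f v <= max_col f.
Proof. exact: leq_bigmax. Qed.

Section Nudge.
Variables (T : finType) (f : T -> nat) (A : {set T}) (z : T).
Hypothesis f_inj : injective f.
Hypothesis A_far : forall x w, x \in A -> w != x -> far (f x) (f w).
Hypothesis zA : z \notin A.

Definition nudge (x : T) : nat := if f x < f z then (f x).+1 else (f x).-1.

Lemma far_z x : x \in A -> far (f x) (f z).
Proof. by move=> xA; apply: A_far => //; apply: contraNneq zA => ->. Qed.

Lemma nudge_fresh x w : x \in A -> nudge x != f w.
Proof.
move=> xA; have := far_z xA; rewrite /nudge /far.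
have [->|wx] := eqVneq w x; first by case: (ltnP (f x) (f z)); lia.
by have := A_far xA wx; rewrite /far; case: (ltnP (f x) (f z)); lia.
Qed.

Lemma nudge_inj : {in A &, injective nudge}.
Proof.
move=> x y xA yA; have [//|yx] := eqVneq y x.
have := far_z xA; have := far_z yA; have := A_far xA yx; rewrite /nudge /far.
by case: (ltnP (f x) (f z)); case: (ltnP (f y) (f z)); lia.
Qed.

Lemma nudge_range x : x \in A -> min_col f <= nudge x <= max_col f.
Proof.
move=> xA; have := far_z xA; rewrite /nudge /far.
have := min_col_le f x; have := max_col_ge f x.
have := min_col_le f z; have := max_col_ge f z.
by case: (ltnP (f x) (f z)); lia.
Qed.

Lemma card_nudge_le_span : #|T| + #|A| <= (span f).+1.
Proof.
pose L := [seq f v | v <- enum T] ++ [seq nudge x | x <- enum A].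
have uL : uniq L.
  rewrite cat_uniq (map_inj_uniq f_inj) enum_uniq map_inj_in_uniq ?enum_uniq ?andbT.
    apply/hasPn => y /mapP[x]; rewrite mem_enum => xA ->.
    by apply/mapP=> -[w _ /eqP]; rewrite (negbTE (nudge_fresh w xA)).
  by move=> x y; rewrite !mem_enum; exact: nudge_inj.
have sL : {subset L <= iota (min_col f) (span f).+1}.
  move=> y; rewrite mem_cat mem_iota /span => /orP[/mapP[v _ ->]|/mapP[x]].
    by have := min_col_le f v; have := max_col_ge f v; lia.
  by rewrite mem_enum => /nudge_range; lia.
have := uniq_leq_size uL sL.
by rewrite size_cat !size_map size_iota -!cardE cardT enumT.
Qed.

End Nudge.

Section Star.
Variables (V : finType) (E : {set {set V}}) (C : {set V}).
Hypothesis E_gt1 : 1 < #|E|.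
Hypothesis starC : is_star_centre E C.

Lemma centre_sub e : e \in E -> C \subset e.
Proof.
move=> eE; have : 0 < #|E :\ e| by move: E_gt1; rewrite (cardsD1 e E) eE; lia.
case/card_gt0P => e'; rewrite !inE => /andP[e'e e'E].
by rewrite -(starC eE e'E _) ?subsetIl // eq_sym.
Qed.

Lemma petal_unique v e1 e2 :
  e1 \in E -> e2 \in E -> v \notin C -> v \in e1 -> v \in e2 -> e1 = e2.
Proof.
move=> e1E e2E vC ve1 ve2; apply/eqP; apply: contraNT vC => ne.
by rewrite -(starC e1E e2E ne) inE ve1 ve2.
Qed.

Lemma card_petal r e : uniform r E -> e \in E -> #|e :\: C| = r - #|C|.
Proof. by move=> unifE eE; rewrite cardsD (setIidPr (centre_sub eE)) unifE. Qed.

(* The petals are disjoint and avoid C, so a star has at least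
   #|C| + #|E| * (r - #|C|) vertices. *)
Lemma card_star_vertices r :
  uniform r E -> #|C| + #|E| * (r - #|C|) <= #|V|.
Proof.
move=> unifE; set P := [set e :\: C | e in E].
have petal_inj : {in E &, injective (fun e => e :\: C)}.
  move=> e1 e2 e1E e2E /= /setP eq12; apply/setP => x.
  have := eq12 x; rewrite !inE; case: (boolP (x \in C)) => //= xC _.
  by rewrite (subsetP (centre_sub e1E)) ?(subsetP (centre_sub e2E)).
have trivP : trivIset P.
  apply/trivIsetP => _ _ /imsetP[e1 e1E ->] /imsetP[e2 e2E ->] ne.
  rewrite disjoint_subset; apply/subsetP => x; rewrite !inE => /andP[xC xe1].
  apply/andP => -[_ xe2]; move: ne; rewrite (petal_unique e1E e2E xC xe1 xe2).
  by rewrite eqxx.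
have coverC : cover P \subset ~: C.
  rewrite cover_imset; apply/bigcupsP => e _.
  by apply/subsetP => x; rewrite !inE => /andP[].
rewrite -(cardsC C) leq_add2l; apply: leq_trans (subset_leq_card coverC).
have -> : #|cover P| = \sum_(A in P) #|A| by apply/eqP; rewrite (leq_card_cover P).2.
rewrite big_imset //=.
by rewrite (eq_bigr (fun _ => r - #|C|)) ?sum_nat_const // => e /(card_petal unifE).
Qed.
End Star.

Section LowerBound.
Variables (V : finType) (E : {set {set V}}) (C : {set V}) (f : V -> nat).
Hypothesis E_gt1 : 1 < #|E|.
Hypothesis starC : is_star_centre E C.
Hypothesis coverE : covered_by_edges E.
Hypothesis colf : L21_colouring E f.

(* A centre vertex shares an edge with every other vertex. *)
Lemma centre_far x w : x \in C -> w != x -> far (f x) (f w).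
Proof.
move=> xC wx; have [e eE we] := coverE w; have xw : x != w by rewrite eq_sym.
exact: colf.1 x w e xw eE (subsetP (centre_sub E_gt1 starC eE) x xC) we.
Qed.

(* Any two vertices either share an edge, or lie in different petals whose
   common part, the centre, is nonempty and avoids both: f is injective. *)
Lemma star_colouring_inj : 0 < #|C| -> injective f.
Proof.
move=> C_gt0 u v; apply: contra_eq => uv.
have [e1 e1E ve1] := coverE v; have [e2 e2E ue2] := coverE u.
have [ue1|ue1] := boolP (u \in e1).
  by have := colf.1 u v e1 uv e1E ue1 ve1; rewrite /far; lia.
have [vC|vC] := boolP (v \in C); first by have := centre_far vC uv; rewrite /far; lia.
have uC : u \notin C by apply: contra ue1; apply/subsetP/(centre_sub E_gt1 starC e1E).
have e12 : e1 != e2 by apply: contraNneq ue1 => ->.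
have witness : (e1 :&: e2) :\: [set u; v] != set0.
  rewrite (starC e1E e2E e12); have [x xC] := card_gt0P C_gt0.
  apply/set0Pn; exists x; rewrite !inE xC andbT.
  by apply/orP => -[/eqP xu|/eqP xv]; [move: uC|move: vC]; rewrite -?xu -?xv xC.
exact: colf.2 uv e1E e2E ve1 ue2 witness.
Qed.

(* Lower bound: combine the counting lemma (with A the centre and z any petal
   vertex) with the vertex count of the star. *)
Lemma star_span_lower r :
  0 < #|C| -> #|C| < r -> uniform r E ->
  #|E| * (r - #|C|) + 2 * #|C| - 1 <= span f.
Proof.
move=> C_gt0 Cr unifE.
have [e eE] : exists e, e \in E by apply/card_gt0P; lia.
have [z] : exists z, z \in e :\: C.
  by apply/card_gt0P; rewrite (card_petal E_gt1 starC unifE eE); lia.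
rewrite inE => /andP[zC _].
have := card_nudge_le_span (star_colouring_inj C_gt0) centre_far zC.
have := card_star_vertices E_gt1 starC unifE; lia.
Qed.

End LowerBound.

Section Construction.
Variables (V : finType) (E : {set {set V}}) (C : {set V}) (r : nat).
Hypothesis E_gt1 : 1 < #|E|.
Hypothesis starC : is_star_centre E C.
Hypothesis coverE : covered_by_edges E.
Hypothesis unifE : uniform r E.

Local Notation m := #|E|.
Local Notation s := (r - #|C|).

Definition edge_of (v : V) : {set V} := odflt set0 [pick e in E | v \in e].

Lemma edge_ofP v : edge_of v \in E /\ v \in edge_of v.
Proof.
rewrite /edge_of; case: pickP => [e /andP[]|none] //=.
by have [e eE ve] := coverE v; move: (none e); rewrite eE ve.
Qed.

Lemma edge_of_petal v e : e \in E -> v \notin C -> v \in e -> edge_of v = e.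
Proof.
have [oE vo] := edge_ofP v.
by move=> eE vC ve; exact: (petal_unique starC oE eE vC vo ve).
Qed.

(* Petal vertices are numbered by (position in petal, index of petal) in
   mixed radix m, giving colours 0 .. m*s-1; the centre then gets the
   colours m*s+1, m*s+3, ..., m*s+2*#|C|-1. *)
Definition star_colour (v : V) : nat :=
  if v \in C then m * s + 1 + 2 * index v (enum C)
  else index v (enum (edge_of v :\: C)) * m + index (edge_of v) (enum E).

Lemma edge_index_lt v : index (edge_of v) (enum E) < m.
Proof. by rewrite cardE index_mem mem_enum; case: (edge_ofP v). Qed.

Lemma petal_colour_lt v : v \notin C -> star_colour v < m * s.
Proof.
move=> vC; rewrite /star_colour (negbTE vC); apply: code_lt (edge_index_lt v) _.
have [eE ve] := edge_ofP v.
by rewrite -(card_petal E_gt1 starC unifE eE) cardE index_mem mem_enum inE vC.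
Qed.

Lemma centre_colour_gt v : v \in C -> m * s < star_colour v.
Proof. by rewrite /star_colour => ->; lia. Qed.

(* Centre and petal colours occupy disjoint ranges; within each range the
   code determines the vertex. *)
Lemma star_colour_inj : injective star_colour.
Proof.
move=> u v; have := @centre_colour_gt u; have := @centre_colour_gt v.
have := @petal_colour_lt u; have := @petal_colour_lt v; rewrite /star_colour.
case: (boolP (u \in C)) => uC; case: (boolP (v \in C)) => vC; try lia.
  by move=> _ _ _ _ /eqP; rewrite eqn_add2l eqn_mul2l /= => /eqP; exact: enum_index_inj.
move=> _ _ _ _ /(code_inj (edge_index_lt u) (edge_index_lt v)) [ju_jv iu_iv].
have [uE ueu] := edge_ofP u; have [vE vev] := edge_ofP v.
have euv := enum_index_inj uE vE iu_iv; rewrite euv in ju_jv ueu.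
by apply: enum_index_inj ju_jv; rewrite inE ?uC ?vC.
Qed.

(* Vertices sharing an edge get far colours: centre colours are spaced by 2
   and lie above the petal colours, and two vertices of one petal share the
   petal index but differ in position, hence differ by a multiple of m >= 2. *)
Lemma star_colour_far u v e :
  u != v -> e \in E -> u \in e -> v \in e -> far (star_colour u) (star_colour v).
Proof.
move=> uv eE ue ve; have := contra_neq (@star_colour_inj u v) uv.
have := @centre_colour_gt u; have := @centre_colour_gt v.
have := @petal_colour_lt u; have := @petal_colour_lt v; rewrite /far /star_colour.
case: (boolP (u \in C)) => uC; case: (boolP (v \in C)) => vC; try lia.
rewrite (edge_of_petal eE uC ue) (edge_of_petal eE vC ve) => _ _ _ _ neq.
apply: code_far; first exact: E_gt1.
by apply: contraNneq neq => ->.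
Qed.

Lemma star_colouring : L21_colouring E star_colour.
Proof.
split; first exact: star_colour_far.
by move=> u v e1 e2 uv _ _ _ _ _; apply: contra_neq uv; exact: star_colour_inj.
Qed.

Lemma star_colour_max : max_col star_colour <= m * s + 2 * #|C| - 1.
Proof.
apply/bigmax_leqP => v _; case: (boolP (v \in C)) => vC; last first.
  by have := petal_colour_lt vC; lia.
have : index v (enum C) < #|C| by rewrite cardE index_mem mem_enum.
by rewrite /star_colour vC; lia.
Qed.
End Construction.

Unset Implicit Arguments.
Theorem lemma3p9 (V : finType) (E : {set {set V}}) (C : {set V}) (r c m : nat) :
  2 <= m -> 1 <= c -> c < r ->
  uniform r E -> #|E| = m -> is_star_centre E C -> #|C| = c ->
  covered_by_edges E ->
  is_lambda E (m * (r - c) + 2 * c - 1).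
Proof.
move=> m_ge2 c_gt0 c_lt_r unifE card_E starC card_C coverE.
have E_gt1 : 1 < #|E| by rewrite card_E.
have lower f : L21_colouring E f -> m * (r - c) + 2 * c - 1 <= span f.
  by move=> colf; rewrite -card_E -card_C star_span_lower // card_C.
split; last exact: lower.
exists (star_colour E C r); have colg := star_colouring E_gt1 starC coverE unifE.
split=> //; apply/anti_leq; rewrite lower // andbT.
apply: leq_trans (leq_subr _ _) _; rewrite -card_E -card_C.
exact: star_colour_max.
Qed.
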